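(* Let an SSSCG have weakly monotonic cost functions with identical leader and follower costs, $c_{i,\ell}=c_{i,f}=:c_i$ for all $i\in R$. Let $(\sigma_\ell,\nu)$ be an OSE or a PSE in which $\sigma_\ell$ is pure, selecting resource $i^\star$. Then this profile is a pure Nash equilibrium of the (simultaneous) singleton congestion game with players $F\cup\{\ell\}$ and costs $c_i$: i.e., for all $i\ne i^\star$ with $\nu_i>0$ and all $j\ne i$, $c_i(\nu_i+[i=i^\star])\le c_j(\nu_j+[j=i^\star]+1)$, the same holding for $i=i^\star$ with $\nu_{i^\star}>0$, namely $c_{i^\star}(\nu_{i^\star}+1)\le c_j(\nu_j+1)$ for $j\ne i^\star$; and the leader has no profitable unilateral deviation: $c_{i^\star}(\nu_{i^\star}+1)\le c_j(\nu_j+1)$ for all $j\ne i^\star$.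
   Context: A symmetric Stackelberg singleton congestion game (SSSCG) consists of a leader $\ell$, a finite set $F$ of followers, a finite set $R$ of resources which every player may select (each player selects exactly one), and cost functions $c_{i,\ell},c_{i,f}:\mathbb N\to\mathbb Q$ ($i\in R$) for the leader and the followers with $c_{i,\ell}(0)=c_{i,f}(0)=0$. The leader commits to a probability distribution $\sigma_\ell$ on $R$ (pure if it puts probability $1$ on one resource). A followers' configuration is $\nu\in\mathbb N^R$ with $\sum_i\nu_i=|F|$. The followers' expected cost of resource $i$ with $x$ followers is $c^{\sigma_\ell}_{i,f}(x)=\sigma_\ell(i)c_{i,f}(x+1)+(1-\sigma_\ell(i))c_{i,f}(x)$; the leader's cost is $c_\ell^{(\sigma_\ell,\nu)}=\sum_{i\in R}\sigma_\ell(i)c_{i,\ell}(\nu_i+1)$. $\nu$ is a Nash equilibrium for $\sigma_\ell$ ($\nu\in E^{\sigma_\ell}$) if for all $i$ with $\nu_i>0$ and all $j\ne i$, $c^{\sigma_\ell}_{i,f}(\nu_i)\le c^{\sigma_\ell}_{j,f}(\nu_j+1)$. An OSE is a pair $(\sigma_\ell,\nu)$ with $\nu\in E^{\sigma_\ell}$ minimizing $c_\ell^{(\sigma_\ell,\nu)}$ over all such pairs. A PSE is a pair $(\sigma_\ell,\nu)$ such that $\sigma_\ell$ attains the minimum over all leader strategies of $\max_{\nu'\in E^{\sigma_\ell}}c_\ell^{(\sigma_\ell,\nu')}$ and $\nu\in E^{\sigma_\ell}$ attains that maximum. $[P]$ denotes $1$ if $P$ holds and $0$ otherwise. Weakly monotonic: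 $c_i(x)\le c_i(x+1)$ for all $i,x$. *)

From HB Require Import structures.
From mathcomp Require Import all_boot all_order all_algebra.
Set Implicit Arguments. Unset Strict Implicit. Unset Printing Implicit Defensive.
Import Order.TTheory GRing.Theory Num.Theory.
Local Open Scope ring_scope.

(* Resources: a finType R.  Followers: only their number nF = |F| matters.
   Cost functions: c : R -> nat -> rat, c i x = cost of resource i with x users. *)

Section SSSCG.
Variable R : finType.

Definition is_dist (s : {ffun R -> rat}) : Prop :=
  (forall i, 0 <= s i) /\ \sum_(i : R) s i = 1.

Definition is_pure_on (s : {ffun R -> rat}) (istar : R) : Prop := s istar = 1.

Definition is_config (nF : nat) (nu : {ffun R -> nat}) : Prop :=
  (\sum_(i : R) nu i)%N = nF.

Definition fcost (cf : R -> nat -> rat) (s : {ffun R -> rat}) (i : R) (x : nat) : rat :=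
  s i * cf i x.+1 + (1 - s i) * cf i x.

Definition lcost (cl : R -> nat -> rat) (s : {ffun R -> rat}) (nu : {ffun R -> nat}) : rat :=
  \sum_(i : R) s i * cl i (nu i).+1.

Definition is_NE (nF : nat) (cf : R -> nat -> rat) (s : {ffun R -> rat})
  (nu : {ffun R -> nat}) : Prop :=
  is_config nF nu /\
  forall i j : R, (0 < nu i)%N -> j != i ->
    fcost cf s i (nu i) <= fcost cf s j (nu j).+1.

Definition is_OSE (nF : nat) (cl cf : R -> nat -> rat) (s : {ffun R -> rat})
  (nu : {ffun R -> nat}) : Prop :=
  is_dist s /\ is_NE nF cf s nu /\
  forall s' nu', is_dist s' -> is_NE nF cf s' nu' -> lcost cl s nu <= lcost cl s' nu'.

(* pessimistic Stackelberg equilibrium: nu attains max_{nu' in E^s} of the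
   leader cost, and for every leader strategy s', max_{nu' in E^s'} of the
   leader cost is at least this value. *)
Definition is_PSE (nF : nat) (cl cf : R -> nat -> rat) (s : {ffun R -> rat})
  (nu : {ffun R -> nat}) : Prop :=
  is_dist s /\ is_NE nF cf s nu /\
  (forall nu', is_NE nF cf s nu' -> lcost cl s nu' <= lcost cl s nu) /\
  (forall s', is_dist s' ->
     exists2 nu', is_NE nF cf s' nu' & lcost cl s nu <= lcost cl s' nu').

Definition weakly_monotonic (c : R -> nat -> rat) : Prop :=
  forall i x, c i x <= c i x.+1.

End SSSCG.

From HB Require Import structures.
From mathcomp Require Import all_boot all_order all_algebra.
Import Order.TTheory GRing.Theory Num.Theory.
Local Open Scope ring_scope.
Set Implicit Arguments. Unset Strict Implicit.

(* When the leader commits to a pure strategy on a resource [a], the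
   followers' expected cost of resource [i] with [x] followers is simply
   c_i(x + [i = a]), and the leader's cost is c_a(nu_a + 1); so an
   equilibrium of the followers for this strategy is exactly a pure Nash
   equilibrium of the congestion game in which the leader sits on [a]
   ([pure_NE], lemma [is_NE_pure]).  This gives the followers' part of the
   theorem at once, and the leader's part when nu_{i*} > 0.

   The remaining case nu_{i*} = 0 is by contradiction: if some resource is
   cheaper for the leader, let [jm] be the cheapest one.  Followers who were
   content against i* remain content when the leader moves to [jm]
   ([pure_NE_switch]), and in every follower equilibrium against [jm] the
   leader pays at most c_jm(nu_jm + 1) ([leader_cost_bound], a counting
   argument).  Both OSE and PSE guarantee that the leader cannot do better
   by switching to a strategy admitting some follower equilibrium
   ([stackelberg_lower_bound]), which yields the contradiction. *)

Section PureLeader.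
Variables (R : finType) (nF : nat) (c : R -> nat -> rat).

Lemma pure_dist_zero (s : {ffun R -> rat}) (a i : R) :
  is_dist s -> is_pure_on s a -> i != a -> s i = 0.
Proof.
move=> [s_ge0 s_sum] sa ia.
have rest0 : \sum_(k | k != a) s k = 0.
  move: s_sum; rewrite (bigD1 a) //= sa => e.
  by apply: (@addrI _ 1); rewrite e addr0.
exact: psumr_eq0P rest0 i ia.
Qed.

Lemma fcost_pure (s : {ffun R -> rat}) (a i : R) (x : nat) :
  is_dist s -> is_pure_on s a -> fcost c s i x = c i (x + (i == a))%N.
Proof.
move=> sd sa; rewrite /fcost.
have [->|ia] := eqVneq i a; first by rewrite sa subrr mul0r addr0 mul1r addn1.
by rewrite (pure_dist_zero sd sa ia) subr0 mul0r add0r mul1r addn0.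
Qed.

Lemma lcost_pure (s : {ffun R -> rat}) (a : R) (nu : {ffun R -> nat}) :
  is_dist s -> is_pure_on s a -> lcost c s nu = c a (nu a).+1.
Proof.
move=> sd sa; rewrite /lcost (bigD1 a) //= sa mul1r big1 ?addr0 //.
by move=> i ia; rewrite (pure_dist_zero sd sa ia) mul0r.
Qed.

Definition pure_NE (a : R) (nu : {ffun R -> nat}) : Prop :=
  is_config nF nu /\
  forall i j : R, (0 < nu i)%N -> j != i ->
    c i (nu i + (i == a))%N <= c j (nu j + (j == a)).+1.

Lemma is_NE_pure (s : {ffun R -> rat}) (a : R) (nu : {ffun R -> nat}) :
  is_dist s -> is_pure_on s a -> is_NE nF c s nu <-> pure_NE a nu.
Proof.
move=> sd sa; have cost_eq i x : fcost c s i x = c i (x + (i == a))%N.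
  exact: fcost_pure.
by split=> -[cfg ne]; split=> // i j i_occ ji; have := ne i j i_occ ji;
  rewrite !cost_eq addSn.
Qed.

Definition pure_strategy (j : R) : {ffun R -> rat} := [ffun k => (k == j)%:R].

Lemma pure_strategy_dist (j : R) :
  is_dist (pure_strategy j) /\ is_pure_on (pure_strategy j) j.
Proof.
split; last by rewrite /is_pure_on ffunE eqxx.
split=> [i|]; first by rewrite ffunE ler0n.
rewrite (bigD1 j) //= ffunE eqxx big1 ?addr0 // => i /negbTE ij.
by rewrite ffunE ij.
Qed.

Lemma config_shift (nu nu' : {ffun R -> nat}) (j : R) :
  (\sum_i nu i = \sum_i nu' i)%N -> (nu j < nu' j)%N ->
  exists2 k, k != j & (nu' k < nu k)%N.
Proof.
move=> same_total more_j.
have [k /andP[kj less_k]|none] := pickP (fun k => (k != j) && (nu' k < nu k)%N).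
  by exists k.
suff : (\sum_i nu i < \sum_i nu' i)%N by rewrite same_total ltnn.
rewrite (bigD1 j) //= [X in (_ < X)%N](bigD1 j) //= -addSn leq_add //.
by apply: leq_sum => k kj; move: (none k); rewrite kj /= => /negbT; rewrite -leqNgt.
Qed.

Hypothesis mon : weakly_monotonic c.

Lemma cost_monotone (i : R) (x y : nat) : (x <= y)%N -> c i x <= c i y.
Proof.
apply: (homo_leq (r := <=%R)); [exact: lexx | exact: le_trans | exact: mon].
Qed.

Lemma leader_cost_bound (jm : R) (nu nu' : {ffun R -> nat}) :
  is_config nF nu ->
  (forall k, (0 < nu k)%N -> k != jm -> c k (nu k) <= c jm (nu jm).+1) ->
  pure_NE jm nu' -> c jm (nu' jm).+1 <= c jm (nu jm).+1.
Proof.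
move=> cfg stable [cfg' ne'].
have [le_jm|lt_jm] := leqP (nu' jm) (nu jm); first exact: cost_monotone.
have [k kj less_k] := config_shift (etrans cfg (esym cfg')) lt_jm.
have jm_occupied : (0 < nu' jm)%N by apply: leq_ltn_trans lt_jm.
have k_occupied : (0 < nu k)%N by apply: leq_ltn_trans less_k.
have := ne' jm k jm_occupied kj; rewrite eqxx (negbTE kj) addn0 addn1 => jm_k.
apply: (le_trans jm_k); apply: le_trans (stable k k_occupied kj).
exact: cost_monotone.
Qed.

Lemma pure_NE_switch (istar jm : R) (nu : {ffun R -> nat}) :
  pure_NE istar nu -> nu istar = 0%N -> jm != istar ->
  (forall k, k != istar -> c jm (nu jm).+1 <= c k (nu k).+1) ->
  c jm (nu jm).+1 <= c istar 1 ->
  pure_NE jm nu.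
Proof.
move=> [cfg ne] empty jm_istar jm_min jm_cheap; split=> // i k i_occ ki.
have istar_i : i != istar by apply: contraTneq i_occ => ->; rewrite empty.
have old k' : k' != i -> c i (nu i) <= c k' (nu k' + (k' == istar)).+1.
  by move=> k'i; have := ne i k' i_occ k'i; rewrite (negbTE istar_i) addn0.
move: ki; have [->|ijm] := eqVneq i jm => ki.
  rewrite (negbTE ki) addn0 addn1.
  by have [->|kistar] := eqVneq k istar; [rewrite empty | exact: jm_min].
rewrite addn0.
have i_jm : c i (nu i) <= c jm (nu jm).+1.
  by have := old jm; rewrite eq_sym ijm (negbTE jm_istar) addn0; apply.
have [->|kjm] := eqVneq k jm; first by rewrite addn1 (le_trans i_jm).
rewrite addn0.
have [->|kistar] := eqVneq k istar; first by rewrite empty (le_trans i_jm).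
by have := old k ki; rewrite (negbTE kistar) addn0.
Qed.

End PureLeader.

Lemma stackelberg_lower_bound (R : finType) (nF : nat) (cl cf : R -> nat -> rat)
    (s : {ffun R -> rat}) (nu : {ffun R -> nat}) :
  is_OSE nF cl cf s nu \/ is_PSE nF cl cf s nu ->
  forall s', is_dist s' -> (exists nu', is_NE nF cf s' nu') ->
  exists2 nu', is_NE nF cf s' nu' & lcost cl s nu <= lcost cl s' nu'.
Proof.
case=> [[_ [_ opt]]|[_ [_ [_ pes]]]] s' s'd [nu' ne'].
  by exists nu'; last exact: opt.
exact: pes.
Qed.

Lemma leader_no_deviation (R : finType) (nF : nat) (c : R -> nat -> rat)
    (s : {ffun R -> rat}) (nu : {ffun R -> nat}) (istar : R) :
  weakly_monotonic c ->
  is_OSE nF c c s nu \/ is_PSE nF c c s nu ->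
  is_pure_on s istar -> nu istar = 0%N ->
  forall j, j != istar -> c istar 1 <= c j (nu j).+1.
Proof.
move=> mon eqm sa empty j j_istar.
have [sd ne] : is_dist s /\ is_NE nF c s nu by case: eqm => [[? []]|[? []]].
have pne := proj1 (is_NE_pure nF c nu sd sa) ne.
rewrite leNgt; apply/negP => j_cheaper.
have [jm jm_istar jm_min] :=
  arg_minP (fun k => c k (nu k).+1) (j_istar : (fun k => k != istar) j).
have jm_cheaper : c jm (nu jm).+1 < c istar 1.
  exact: le_lt_trans (jm_min j j_istar) j_cheaper.
have [jmd jma] := pure_strategy_dist jm.
have stable k : (0 < nu k)%N -> k != jm -> c k (nu k) <= c jm (nu jm).+1.
  move=> k_occ kjm; have k_istar : k != istar.
    by apply: contraTneq k_occ => ->; rewrite empty.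
  have jm_k : jm != k by rewrite eq_sym.
  by have := pne.2 k jm k_occ jm_k; rewrite (negbTE k_istar) (negbTE jm_istar) !addn0.
have nu_ne : is_NE nF c (pure_strategy jm) nu.
  apply/(is_NE_pure nF c nu jmd jma).
  exact: pure_NE_switch pne empty jm_istar jm_min (ltW jm_cheaper).
have [nu' ne' s_le] := stackelberg_lower_bound eqm jmd (ex_intro _ nu nu_ne).
move: s_le; rewrite (lcost_pure _ _ sd sa) (lcost_pure _ _ jmd jma) empty.
have := leader_cost_bound mon pne.1 stable (proj1 (is_NE_pure nF c nu' jmd jma) ne').
by move=> bound /le_trans/(_ bound); rewrite leNgt jm_cheaper.
Qed.

Theorem theorem10 (R : finType) (nF : nat) (c : R -> nat -> rat)
  (c0 : forall i, c i 0%N = 0)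
  (hmon : weakly_monotonic c)
  (s : {ffun R -> rat}) (nu : {ffun R -> nat}) (istar : R)
  (heq : is_OSE nF c c s nu \/ is_PSE nF c c s nu)
  (hpure : is_pure_on s istar) :
  (forall i j : R, (0 < nu i)%N -> j != i ->
     c i (nu i + (i == istar))%N <= c j (nu j + (j == istar)).+1) /\
  (forall j : R, j != istar -> c istar (nu istar).+1 <= c j (nu j).+1).
Proof.
have [sd ne] : is_dist s /\ is_NE nF c s nu by case: heq => [[? []]|[? []]].
have [_ followers_ok] := proj1 (is_NE_pure nF c nu sd hpure) ne.
split=> // j j_istar.
have [empty|occupied] := posnP (nu istar).
  by rewrite empty; exact: leader_no_deviation hmon heq hpure empty j j_istar.
by have := followers_ok istar j occupied j_istar;
   rewrite eqxx (negbTE j_istar) addn0 addn1.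
Qed.
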